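(* Let $\mathbf{A}\in\mathbb{R}^{(\ell m)\times(qn)}$ be a block matrix with $\ell\times q$ blocks of size $m\times n$, and let $\mathbf{B}=\mathbf{S}_{\ell,m}\mathbf{A}\mathbf{S}_{q,n}^\top$. Let $\mathscr{A}$, $\mathscr{B}$, $\mathscr{E}$, $\mathscr{F}$ be the inner blockspan, outer blockspan, outer structure space and inner structure space of $\mathbf{A}$. Then $\mathscr{B}\subseteq\mathscr{E}$ and $\mathscr{A}\subseteq\mathscr{F}$.
   Context: Block conventions: $\mathbf{A}^{(\gamma,\delta)}\in\mathbb{R}^{m\times n}$ is the block of $\mathbf{A}$ in block position $(\gamma,\delta)\in[\ell]\times[q]$, with $\mathbf{A}^{(\gamma,\delta)}_{\alpha\beta}=\mathbf{A}_{(\gamma-1)m+\alpha,(\delta-1)n+\beta}$. For $a,b\ge1$, $s=ab$, the shuffle matrix $\mathbf{S}_{a,b}\in\mathbb{R}^{s\times s}$ has row $(i-1)a+j$ equal to $\mathbf{e}^\top_{(j-1)b+i}$ ($i\in[b]$, $j\in[a]$). $\mathbf{B}\in\mathbb{R}^{(m\ell)\times(nq)}$ is viewed as an $m\times n$ grid of $\ell\times q$ blocks $\mathbf{B}^{(\alpha,\beta)}$, with $\mathbf{B}^{(\alpha,\beta)}_{\gamma\delta}=\mathbf{B}_{(\alpha-1)\ell+\gamma,(\beta-1)q+\delta}$. Let $\mathbf{A}_1,\dots,\mathbf{A}_p$ be the distinct nonzero blocks of $\mathbf{A}$, $\eta_k$ the number of block positions at which $\mathbf{A}_k$ occurs, and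 $\mathbf{E}_k\in\mathbb{R}^{\ell\times q}$ the location-tally matrix with $[\mathbf{E}_k]_{\gamma\delta}=1/\sqrt{\eta_k}$ if $\mathbf{A}^{(\gamma,\delta)}=\mathbf{A}_k$ and $0$ otherwise. Analogously let $\mathbf{B}_1,\dots,\mathbf{B}_\rho$ be the distinct nonzero blocks of $\mathbf{B}$, $\xi_\kappa$ the number of block positions of $\mathbf{B}$ at which $\mathbf{B}_\kappa$ occurs, and $\mathbf{F}_\kappa\in\mathbb{R}^{m\times n}$ with $[\mathbf{F}_\kappa]_{\alpha\beta}=1/\sqrt{\xi_\kappa}$ if $\mathbf{B}^{(\alpha,\beta)}=\mathbf{B}_\kappa$ and $0$ otherwise. Define $\mathscr{A}=\mathrm{span}\{\mathbf{A}_k\}$ (inner blockspan), $\mathscr{B}=\mathrm{span}\{\mathbf{B}_\kappa\}$ (outer blockspan), $\mathscr{E}=\mathrm{span}\{\mathbf{E}_k\}$ (outer structure space), $\mathscr{F}=\mathrm{span}\{\mathbf{F}_\kappa\}$ (inner structure space). *)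

From HB Require Import structures.
From mathcomp Require Import all_boot all_order all_algebra.
Set Implicit Arguments. Unset Strict Implicit. Unset Printing Implicit Defensive.
Import Order.TTheory GRing.Theory Num.Theory.
Local Open Scope ring_scope.

(* Shuffle matrix S_{a,b} (s = a*b, 0-based indices): row  i*a + j  (i < b, j < a)
   is the unit row vector e_{j*b + i}.  For a row index r, i = r %/ a, j = r %% a. *)
Definition shuffle (R : nzRingType) (a b : nat) : 'M[R]_(a * b) :=
  \matrix_(r < a * b, c < a * b) ((nat_of_ord c == (r %% a) * b + r %/ a)%N%:R).

(* Block (g,d) (of size r x t) of M viewed as a p x s grid of r x t blocks:
   blk M g d a b = M_{g*r + a, d*t + b}  (mxvec_index g a has value g*r+a). *)
Definition blk (R : Type) (p r s t : nat) (M : 'M[R]_(p * r, s * t))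
  (g : 'I_p) (d : 'I_s) : 'M[R]_(r, t) :=
  \matrix_(a < r, b < t) M (mxvec_index g a) (mxvec_index d b).

Definition dblocks (R : nzRingType) (p r s t : nat) (M : 'M[R]_(p * r, s * t))
  : seq 'M[R]_(r, t) :=
  undup [seq X <- [seq blk M x.1 x.2 | x : 'I_p * 'I_s] | X != 0].

Definition occ (R : nzRingType) (p r s t : nat) (M : 'M[R]_(p * r, s * t))
  (X : 'M[R]_(r, t)) : nat :=
  #|[set x : 'I_p * 'I_s | blk M x.1 x.2 == X]|.

Definition tally (R : rcfType) (p r s t : nat) (M : 'M[R]_(p * r, s * t))
  (X : 'M[R]_(r, t)) : 'M[R]_(p, s) :=
  \matrix_(g < p, d < s)
    (if blk M g d == X then (Num.sqrt ((occ M X)%:R))^-1 else 0).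

Definition tallies (R : rcfType) (p r s t : nat) (M : 'M[R]_(p * r, s * t))
  : seq 'M[R]_(p, s) :=
  [seq tally M X | X <- dblocks M].

Definition shufB (R : rcfType) (l m q n : nat) (A : 'M[R]_(l * m, q * n))
  : 'M[R]_(l * m, q * n) :=
  shuffle R l m *m A *m (shuffle R q n)^T.

(* B re-typed so as to be viewed as an m x n grid of l x q blocks
   (same entries, index types 'I_(l*m) ~ 'I_(m*l) cast). *)
Definition Bgrid (R : rcfType) (l m q n : nat) (A : 'M[R]_(l * m, q * n))
  : 'M[R]_(m * l, n * q) :=
  castmx (mulnC l m, mulnC q n) (shufB A).

From Pilot Require Import Defs.
From HB Require Import structures.
From mathcomp Require Import all_boot all_order all_algebra.
Import Order.TTheory GRing.Theory Num.Theory.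
Local Open Scope ring_scope.

(* Conjugating by the shuffle matrices swaps inner and outer block indices:
   B^(a,b)_(g,d) = A^(g,d)_(a,b).  So the block B^(a,b), read as a function of
   the block position (g,d) of A, is the (a,b) entry of every block of A, i.e.
   sum_k [A_k]_(a,b) sqrt(eta_k) E_k; the second inclusion is the same
   argument with the roles of A and B exchanged. *)

Lemma index_allpairs (T1 T2 : eqType) (s1 : seq T1) (s2 : seq T2) x y :
  x \in s1 -> y \in s2 ->
  index (x, y) [seq (x1, x2) | x1 <- s1, x2 <- s2] =
  (index x s1 * size s2 + index y s2)%N.
Proof.
move=> + ys2; elim: s1 => [|x1 s1 IHs1] //= xs1; rewrite index_cat.
have [<-|nx1x] := eqVneq x1 x.
  by rewrite map_f // index_map //; move=> ? ? [].
have -> : (x, y) \in [seq (x1, x2) | x2 <- s2] = false.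
  by apply/mapP => -[? _ [Ex _]]; rewrite Ex eqxx in nx1x.
rewrite size_map IHs1; last by move: xs1; rewrite inE eq_sym (negPf nx1x).
by rewrite mulSn addnA.
Qed.

Lemma mxvec_indexE m n (i : 'I_m) (j : 'I_n) :
  mxvec_index i j = (i * n + j)%N :> nat.
Proof.
rewrite /mxvec_index /= /enum_rank enum_rank_in.unlock insubdK.
  rewrite enumT unlock /=; change (index (i, j) (prod_enum 'I_m 'I_n) = (i * n + j)%N).
  by rewrite /prod_enum index_allpairs ?mem_enum // !index_enum_ord size_enum_ord.
by rewrite cardE [_ \in _]index_mem mem_enum.
Qed.

Section Shuffle.

Context {R : nzRingType} {a b : nat}.

Lemma row_shuffle (i : 'I_a) (j : 'I_b) (r : 'I_(a * b)) :
  r = (j * a + i)%N :> nat -> row r (shuffle R a b) = delta_mx 0 (mxvec_index i j).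
Proof.
move=> Er; have a_gt0 : (0 < a)%N by apply: leq_ltn_trans (ltn_ord i).
apply/rowP => c; rewrite !mxE Er modnMDl divnMDl // modn_small // divn_small //.
by rewrite addn0 eqxx /= -mxvec_indexE.
Qed.

Lemma shuffle_mulmx (i : 'I_a) (j : 'I_b) k (M : 'M[R]_(a * b, k)) (r : 'I_(a * b)) c :
  r = (j * a + i)%N :> nat -> (shuffle R a b *m M) r c = M (mxvec_index i j) c.
Proof.
move=> /row_shuffle Sr; have := row_mul r (shuffle R a b) M.
by rewrite Sr -rowE => /rowP/(_ c); rewrite !mxE.
Qed.

Lemma mulmx_trshuffle (i : 'I_a) (j : 'I_b) k (M : 'M[R]_(k, a * b)) r (c : 'I_(a * b)) :
  c = (j * a + i)%N :> nat -> (M *m (shuffle R a b)^T) r c = M r (mxvec_index i j).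
Proof.
move=> /row_shuffle Sc.
have : col c (M *m (shuffle R a b)^T) = col (mxvec_index i j) M.
  by rewrite colE -mulmxA -colE -tr_row Sc trmx_delta -colE.
by move=> /colP/(_ r); rewrite !mxE.
Qed.

End Shuffle.

Lemma blk_Bgrid (R : rcfType) (l q m n : nat) (A : 'M[R]_(l * m, q * n)) g d a b :
  blk (Bgrid A) a b g d = blk A g d a b.
Proof.
rewrite !mxE castmxE /shufB.
rewrite (mulmx_trshuffle d b); last by rewrite -[RHS]mxvec_indexE.
by rewrite (shuffle_mulmx g a) // -[RHS]mxvec_indexE.
Qed.

Section BlockEntriesInTallySpan.

Variables (R : rcfType) (p r s t : nat) (M : 'M[R]_(p * r, s * t)).

Lemma blk_mem_dblocks g d : blk M g d != 0 -> blk M g d \in dblocks M.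
Proof.
move=> nz; rewrite mem_undup mem_filter nz.
by apply/mapP; exists (g, d); rewrite ?mem_enum.
Qed.

Lemma dblocks_neq0 X : X \in dblocks M -> X != 0.
Proof. by rewrite mem_undup mem_filter => /andP[]. Qed.

Lemma occ_blk_gt0 g d : (0 < occ M (blk M g d))%N.
Proof. by rewrite card_gt0; apply/set0Pn; exists (g, d); rewrite inE. Qed.

Lemma scale_tally_blk g d :
  (Num.sqrt (occ M (blk M g d))%:R *: Defs.tally M (blk M g d)) g d = 1.
Proof.
by rewrite !mxE eqxx mulfV // sqrtr_eq0 -ltNge ltr0n occ_blk_gt0.
Qed.

Lemma tally_eq0 X g d : X != blk M g d -> Defs.tally M X g d = 0.
Proof. by rewrite mxE eq_sym => /negPf->. Qed.

Lemma blk_entry_tally_sum (a : 'I_r) (b : 'I_t) :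
  \matrix_(g, d) blk M g d a b =
  \sum_(X <- dblocks M) (X a b * Num.sqrt (occ M X)%:R) *: Defs.tally M X.
Proof.
apply/matrixP => g d; rewrite summxE [LHS]mxE.
have [Z0|Znz] := eqVneq (blk M g d) 0.
  rewrite Z0 mxE big1_seq // => X /andP[_ /dblocks_neq0 nzX].
  by rewrite mxE tally_eq0 ?mulr0 // Z0.
rewrite (bigD1_seq (blk M g d)) ?blk_mem_dblocks ?undup_uniq //= big1 ?addr0.
  by rewrite -scalerA [RHS]mxE scale_tally_blk ?mulr1.
by move=> X nX; rewrite mxE tally_eq0 ?mulr0.
Qed.

Lemma blk_entry_mem_tallies (a : 'I_r) (b : 'I_t) :
  (\matrix_(g, d) blk M g d a b \in << tallies M >>)%VS.
Proof.
rewrite blk_entry_tally_sum big_seq; apply: memv_suml => X X_M.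
by apply/memvZ/memv_span/map_f.
Qed.

Lemma span_dblocks_swapped (N : 'M[R]_(r * p, t * s)) :
  (forall g d a b, blk N a b g d = blk M g d a b) ->
  (<< dblocks N >> <= << tallies M >>)%VS.
Proof.
move=> NM; apply/span_subvP => X.
rewrite mem_undup mem_filter => /andP[_ /mapP[[a b] _ ->]] /=.
have -> : blk N a b = \matrix_(g, d) blk M g d a b.
  by apply/matrixP => g d; rewrite NM [RHS]mxE.
exact: blk_entry_mem_tallies.
Qed.

End BlockEntriesInTallySpan.

Theorem proposition1 (R : rcfType) (l q m n : nat) (A : 'M[R]_(l * m, q * n)) :
  (<< dblocks (Bgrid A) >> <= << tallies A >>)%VS /\
  (<< dblocks A >> <= << tallies (Bgrid A) >>)%VS.
Proof.
by split; apply: span_dblocks_swapped => g d a b; rewrite blk_Bgrid.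
Qed.
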